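(* Let $N\ge1$, $n\ge1$ and $n_0=n_1=\cdots=n_N=n$. Then for every integer $0\le k\le n$, $$d(k)=\frac{(n-k)(n+1-k)}{2}+\frac{a(k)}{2}\big((a(k)-1)N+2b(k)\big),$$ where $a(k)=\lfloor (n-k)/N\rfloor$ and $b(k)=(n-k)\bmod N$. In particular, $d(k)=\frac{(n-k)(n+1-k)}{2}$ whenever $N\ge n$.
   Context: For a vector $\mathbf n=(n_0,\dots,n_N)$ of positive integers, with nondecreasing rearrangement $\tilde n_0\le\cdots\le\tilde n_N$, $c_i=1-i+\min_{k'=1,\dots,N}\lfloor(\sum_{l=0}^{k'}\tilde n_l-i)/k'\rfloor$ for $i=1,\dots,\tilde n_0$, and $d(k)=\sum_{i=k+1}^{\tilde n_0}c_i$; this is the diversity-multiplexing tradeoff at integer multiplexing gain $k$ of the $(n_0,\dots,n_N)$ Rayleigh product channel (channel matrix a product of $N$ independent i.i.d. $\mathcal{CN}(0,1)$ matrices of sizes $n_{i-1}\times n_i$). *)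

From HB Require Import structures.
From mathcomp Require Import all_boot all_order all_algebra.
Set Implicit Arguments. Unset Strict Implicit. Unset Printing Implicit Defensive.
Import Order.TTheory GRing.Theory Num.Theory.
Local Open Scope ring_scope.

(* A dimension vector (n_0,...,n_N) is a function nv : 'I_N.+1 -> nat. *)

Definition ntil (N : nat) (nv : 'I_N.+1 -> nat) (l : nat) : nat :=
  nth 0%N (sort leq (codom nv)) l.

Definition cterm (N : nat) (nv : 'I_N.+1 -> nat) (i k' : nat) : int :=
  ((\sum_(0 <= l < k'.+1) (ntil nv l)%:Z - i%:Z) %/ k'%:Z)%Z.

Definition c_coef (N : nat) (nv : 'I_N.+1 -> nat) (i : nat) : int :=
  1 - i%:Z + \big[Order.min/cterm nv i 1]_(1 <= k' < N.+1) cterm nv i k'.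

Definition dmt (N : nat) (nv : 'I_N.+1 -> nat) (k : nat) : int :=
  \sum_(k.+1 <= i < (ntil nv 0).+1) c_coef nv i.

From HB Require Import structures.
From mathcomp Require Import all_boot all_order all_algebra.
From mathcomp Require Import zify ring.
Import Order.TTheory GRing.Theory Num.Theory.
Local Open Scope ring_scope.

(* For the constant dimension vector every rearranged entry ñ_l equals n, so
   the floor in c_i is  n + ⌊(n - i)/k'⌋, which is nonincreasing in k'; the
   minimum over 1 <= k' <= N is attained at k' = N, giving
       c_i = (n + 1 - i) + ⌊(n - i)/N⌋.
   Summing over i = k+1, ..., n and reindexing by j = n - i (0 <= j < m with
   m = n - k) splits d(k) into two closed-form sums:
       Σ_{j<m} (j + 1) = C(m + 1, 2)   and   Σ_{j<m} ⌊j/N⌋ = N·C(a, 2) + a·b,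
   where a = ⌊m/N⌋ and b = m mod N.  The first is the triangular sum, the
   second follows by induction on m (the step adds ⌊m/N⌋, and crossing a
   multiple of N turns a·b into N·C(a+1,2)).  Rewriting the binomials as
   halves of products gives the stated formula; when N >= n we have m <= N,
   hence a·((a-1)N + 2b) = 0. *)

Lemma ntil_const (N n l : nat) : (l <= N)%N -> ntil (fun _ : 'I_N.+1 => n) l = n.
Proof.
move=> hl; rewrite /ntil.
have hs : (l < size (sort leq (codom (fun _ : 'I_N.+1 => n))))%N.
  by rewrite size_sort size_codom card_ord.
by have := mem_nth 0%N hs; rewrite mem_sort => /codomP [x ->].
Qed.

Lemma cterm_const (N n i k : nat) : (0 < k <= N)%N -> (i <= n)%N ->
  cterm (fun _ : 'I_N.+1 => n) i k = (n + (n - i) %/ k)%N%:Z.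
Proof.
move=> /andP [k_gt0 k_le_N] i_le_n; rewrite /cterm.
rewrite (eq_big_nat _ _ (F2 := fun _ => n%:Z)); last first.
  by move=> l /andP [_ hl]; rewrite ntil_const // -ltnS (leq_trans hl).
have -> : \sum_(0 <= l < k.+1) n%:Z - i%:Z = n%:Z * k%:Z + (n - i)%N%:Z.
  by rewrite sumr_const_nat subn0 -mulr_natr natz; lia.
by rewrite divzMDl -?lt0n // divz_nat PoszD.
Qed.

Lemma bigmin_nat_last (d : Order.disp_t) (T : orderType d) (F : nat -> T)
    (m n : nat) :
  (m <= n)%N -> (forall k, (m <= k <= n)%N -> (F n <= F k)%O) ->
  \big[Order.min/F m]_(m <= k < n.+1) F k = F n.
Proof.
move=> m_le_n F_ge; apply/le_anti/andP; split.
  by apply: ge_bigmin_seq => //; rewrite mem_index_iota m_le_n ltnSn.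
rewrite big_seq; apply: le_bigmin => [|k]; first by rewrite F_ge ?leqnn ?m_le_n.
by rewrite mem_index_iota ltnS; apply: F_ge.
Qed.

(* The coefficient c_i of the square channel: the minimum sits at k' = N. *)
Lemma c_coef_const (N n i : nat) : (0 < N)%N -> (i <= n)%N ->
  c_coef (fun _ : 'I_N.+1 => n) i = (n.+1 - i + (n - i) %/ N)%N%:Z.
Proof.
move=> N_gt0 i_le_n; rewrite /c_coef bigmin_nat_last //; last first.
  move=> k /andP [k_gt0 k_le_N].
  rewrite !cterm_const ?N_gt0 ?k_gt0 //= lez_nat leq_add2l.
  exact: leq_div2l.
by rewrite cterm_const ?N_gt0 //; lia.
Qed.

Lemma sum_rev_shift (F : nat -> nat) (k n : nat) :
  (\sum_(k.+1 <= i < n.+1) F (n - i) = \sum_(0 <= j < n - k) F j)%N.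
Proof.
rewrite big_nat_rev -{1}[k.+1]add0n big_addn subSS.
by apply: eq_big_nat => j /andP [_ hj]; congr F; lia.
Qed.

Lemma sum_div_floor (N m : nat) : (0 < N)%N ->
  (\sum_(0 <= j < m) j %/ N = N * 'C(m %/ N, 2) + m %/ N * (m %% N))%N.
Proof.
move=> N_gt0; elim: m => [|m IHm].
  by rewrite big_geq // div0n mod0n bin_small ?muln0.
rewrite big_nat_recr //= IHm.
have m_eq := divn_eq m N; have b_lt : (m %% N < N)%N by rewrite ltn_pmod.
move: m_eq b_lt; set a := (m %/ N)%N; set b := (m %% N)%N => m_eq b_lt.
have [b_last | b_inner] := eqVneq b.+1 N.
- have -> : m.+1 = (a.+1 * N)%N by rewrite m_eq mulSnr -addnS b_last.
  rewrite (mulnK _ N_gt0) modnMl binS bin1 mulnDr; lia.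
- have b1_lt : (b.+1 < N)%N by rewrite ltn_neqAle b_inner.
  have -> : m.+1 = (a * N + b.+1)%N by rewrite m_eq addnS.
  rewrite divnMDl // modnMDl divn_small // modn_small // addn0 mulnS; lia.
Qed.

Lemma dmt_const (N n k : nat) : (0 < N)%N -> (k <= n)%N ->
  dmt (fun _ : 'I_N.+1 => n) k
    = (\sum_(0 <= j < n - k) (j.+1 + j %/ N))%N%:Z.
Proof.
move=> N_gt0 k_le_n; rewrite /dmt ntil_const //.
rewrite (eq_big_nat _ _ (F2 := fun i => ((n - i).+1 + (n - i) %/ N)%N%:Z)).
  rewrite -(big_morph Posz PoszD (erefl _)).
  by rewrite (sum_rev_shift (fun j => j.+1 + j %/ N)%N).
by move=> i /andP [_ i_le_n]; rewrite c_coef_const // -subSn.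
Qed.

Lemma bin2_double (R : pzRingType) (a : nat) :
  2 * 'C(a, 2)%:R = a%:R * (a%:R - 1) :> R.
Proof.
case: a => [|a]; first by rewrite mul0r bin0n mulr0.
rewrite -natrM -(mul_bin_diag a.+1 1) bin1 natrM; congr (_ * _).
by rewrite mulrSr addrK.
Qed.

Lemma dmt_square (N n k : nat) : (0 < N)%N -> (k <= n)%N ->
  let a := ((n - k) %/ N)%N in
  let b := ((n - k) %% N)%N in
  ((dmt (fun _ : 'I_N.+1 => n) k)%:~R : rat)
    = ((n - k) * (n + 1 - k))%N%:R / 2
      + a%:R / 2 * ((a%:R - 1) * N%:R + 2 * b%:R).
Proof.
move=> N_gt0 k_le_n a b.
rewrite dmt_const // big_split /= sum_div_floor // -/a -/b.
have -> : (\sum_(0 <= j < n - k) j.+1 = 'C((n - k).+1, 2))%N.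
  by rewrite -bin2_sum big_nat_recl //= add0n; apply: eq_big_nat.
have := bin2_double rat (n - k).+1; have := bin2_double rat a.
move: 'C(a, 2) 'C((n - k).+1, 2) => Ca Cm two_Ca two_Cm.
rewrite -pmulrn addn1 (subSn k_le_n) !natrD !natrM.
have -> : Cm%:R = (n - k).+1%:R * ((n - k).+1%:R - 1) / 2 :> rat.
  by rewrite -two_Cm; field.
have -> : Ca%:R = a%:R * (a%:R - 1) / 2 :> rat.
  by rewrite -two_Ca; field.
by field.
Qed.

(* Corollary 4: the general formula, which collapses to the triangular term
   (n - k)(n + 1 - k)/2 when N >= n because then ⌊(n - k)/N⌋ <= 1 and the
   correction vanishes in both cases ⌊(n - k)/N⌋ = 0 and n - k = N. *)
Theorem corollary4 (N n : nat) (hN : (1 <= N)%N) (hn : (1 <= n)%N) :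
  (forall k : nat, (k <= n)%N ->
     let a := ((n - k) %/ N)%N in
     let b := ((n - k) %% N)%N in
     ((dmt (fun _ : 'I_N.+1 => n) k)%:~R : rat)
       = ((n - k) * (n + 1 - k))%N%:R / 2
         + a%:R / 2 * ((a%:R - 1) * N%:R + 2 * b%:R))
  /\ ((n <= N)%N -> forall k : nat, (k <= n)%N ->
     ((dmt (fun _ : 'I_N.+1 => n) k)%:~R : rat)
       = ((n - k) * (n + 1 - k))%N%:R / 2).
Proof.
split=> [k k_le_n | n_le_N k k_le_n]; first exact: dmt_square.
rewrite dmt_square //=.
have [m_lt_N | m_ge_N] := ltnP (n - k) N.
  by rewrite divn_small // !mul0r addr0.
have -> : (n - k = N)%N by lia.
by rewrite divnn hN modnn subrr !(mul0r, mulr0, addr0).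
Qed.
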